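(* Let $F$ be a field. Every almost identity PC-map $\mathrm{UT}(\infty,F)\to\mathrm{UT}(\infty,F)$ is the identity map.
   Context: $\mathrm{UT}(\infty,F)$ is the group of all $\mathbb N\times\mathbb N$ matrices over $F$ with $1$ on the diagonal and $0$ below it. $e$ is the identity, $e_{ij}$ the matrix unit, $t_{ij}(\alpha)=e+\alpha e_{ij}$ ($i<j$). $[x,y]=xyx^{-1}y^{-1}$. A PC-map is a bijection $\varphi$ of the group with $\varphi([x,y])=[\varphi(x),\varphi(y)]$ for all $x,y$; it is almost identity if $\varphi(t_{ij}(\alpha))=t_{ij}(\alpha)$ for all $i<j$, $\alpha\in F$. *)

From HB Require Import structures.
From mathcomp Require Import all_boot all_order all_algebra.
Set Implicit Arguments. Unset Strict Implicit. Unset Printing Implicit Defensive.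
Import GRing.Theory.
Local Open Scope ring_scope.

(* N x N matrices over F, indexed from 0. *)
Definition nmat (F : fieldType) := nat -> nat -> F.

Section UT.
Variable F : fieldType.

Definition isUT (A : nmat F) : Prop :=
  forall i j : nat, (A i i = 1) /\ ((j < i)%N -> A i j = 0).

Definition eUT : nmat F := fun i j => (i == j)%:R.

Definition munit (i j : nat) : nmat F := fun k l => ((k == i) && (l == j))%:R.
Definition tUT (i j : nat) (a : F) : nmat F := fun k l => eUT k l + a * munit i j k l.

(* product; for upper triangular matrices the entry (i,j) sum
   \sum_k A i k B k j only involves k <= j, so it is a finite sum *)
Definition mulUT (A B : nmat F) : nmat F :=
  fun i j => \sum_(k < j.+1) A i k * B k j.

(* inverse of a unitriangular matrix, computed row by row from B A = e:
   B i j = 0 (j < i), B i i = 1, B i j = - \sum_(i <= k < j) B i k * A k j *)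
Fixpoint invrow (A : nmat F) (i n : nat) : seq F :=
  match n with
  | 0 => [::]
  | n'.+1 =>
      let s := invrow A i n' in
      rcons s (if (n' < i)%N then 0
               else if n' == i then 1
               else - \sum_(i <= k < n') s`_k * A k n')
  end.

Definition invUT (A : nmat F) : nmat F := fun i j => (invrow A i j.+1)`_j.

Definition commUT (x y : nmat F) : nmat F :=
  mulUT (mulUT (mulUT x y) (invUT x)) (invUT y).

Definition PCmap (phi : nmat F -> nmat F) : Prop :=
  [/\ (forall x, isUT x -> isUT (phi x)),
      (forall x y, isUT x -> isUT y -> phi x = phi y -> x = y),
      (forall y, isUT y -> exists2 x, isUT x & phi x = y)
    & (forall x y, isUT x -> isUT y -> phi (commUT x y) = commUT (phi x) (phi y))].

Definition almost_identity (phi : nmat F -> nmat F) : Prop :=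
  forall (i j : nat) (a : F), (i < j)%N -> phi (tUT i j a) = tUT i j a.

End UT.

(* Rows 1, 2, ... : since phi fixes transvections and preserves commutators,
   it fixes [[x, t_0j(1)], t_k,k+1(1)] = t_0,k+1((x^-1)_jk); so x^-1 and
   phi(x)^-1, hence x and phi(x), agree outside row 0.
   Row 0 : phi maps the one-column matrix colUT v n = e + v e_n^T to the same
   matrix with its corner v_0 replaced by some g(v).  Commutators with
   transvections show that g does not depend on n; the identity
   [e + u e_(m+2)^T, e + a e_m^T + b e_(m+1)^T] = e + (a + b) e_(m+2)^T
   (when u_m = u_(m+1) = -1) shows that g is additive, so g(v) = v_0 by
   splitting v into single entries.  Finally the column i of any x is read off
   [x, t_iq(1)], which is a one-column matrix when the rows of x from q on are
   trivial; applied once to x and once to [x, t_i,i+1(1)] this fixes every x. *)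

From HB Require Import structures.
From mathcomp Require Import all_boot all_order all_algebra.
From Stdlib Require Import FunctionalExtensionality.
From mathcomp Require Import ring zify.
Set Implicit Arguments. Unset Strict Implicit. Unset Printing Implicit Defensive.
Import GRing.Theory.
Local Open Scope ring_scope.

Notation vanishes_from v n := (forall p, (n <= p)%N -> v p = 0).
Notation unit_row x q := (forall r, x q r = (q == r)%:R).

Section UnitriangularMatrices.
Variable F : fieldType.
Implicit Types (A B x : nmat F) (v a b : nat -> F).

Lemma matrixP A B : (forall p r, A p r = B p r) -> A = B.
Proof.
by move=> eAB; do 2!apply: functional_extensionality => ?; apply: eAB.
Qed.

Lemma sum_delta_l (N c : nat) (G : nat -> F) :
  \sum_(k < N) (((k : nat) == c)%:R * G k) = if (c < N)%N then G c else 0.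
Proof.
case: ltnP => hc; last first.
  by rewrite big1 // => k _; rewrite ltn_eqF ?mul0r // (leq_trans (ltn_ord k)).
rewrite (bigD1 (Ordinal hc)) //= eqxx mul1r big1 ?addr0 // => k hk.
suff /negbTE -> : (k : nat) != c by rewrite mul0r.
by apply: contra hk => /eqP ck; apply/eqP/val_inj.
Qed.

Lemma sum_delta_r (N c : nat) (G : nat -> F) :
  \sum_(k < N) (G k * ((k : nat) == c)%:R) = if (c < N)%N then G c else 0.
Proof. by rewrite -sum_delta_l; apply: eq_bigr => k _; rewrite mulrC. Qed.

Lemma isUT_col0 x p : isUT x -> x p 0 = (p == 0)%:R.
Proof. by case: p => [|p] hx; [exact: (proj1 (hx 0 0)) | exact: (proj2 (hx p.+1 0))]. Qed.

Lemma sum_deltaUT B q r : isUT B ->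
  \sum_(k < r.+1) ((k : nat) == q)%:R * B k r = B q r.
Proof.
move=> hB; rewrite (sum_delta_l _ _ (B^~ r)) ltnS.
by case: leqP => // rq; rewrite (proj2 (hB q r) rq).
Qed.

Lemma mulUTE A B p r N : isUT B -> (r < N)%N ->
  mulUT A B p r = \sum_(k < N) A p k * B k r.
Proof.
move=> hB rN; rewrite /mulUT (big_ord_widen N (fun k => A p k * B k r) rN).
rewrite big_mkcond; apply: eq_bigr => k _; case: ltnP => // rk.
by rewrite (proj2 (hB k r) rk) mulr0.
Qed.

Lemma isUT_mul A B : isUT A -> isUT B -> isUT (mulUT A B).
Proof.
move=> hA hB i j; split=> [|ji]; rewrite /mulUT.
  rewrite big_ord_recr /= (proj1 (hA i i)) (proj1 (hB i i)) mulr1 big1 ?add0r //.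
  by move=> k _; rewrite (proj2 (hA i k) (ltn_ord k)) mul0r.
by rewrite big1 // => k _; rewrite (proj2 (hA i k) (leq_trans (ltn_ord k) ji)) mul0r.
Qed.

Lemma mulUTA A B C : isUT B -> isUT C ->
  mulUT (mulUT A B) C = mulUT A (mulUT B C).
Proof.
move=> hB hC; apply: matrixP => p r.
rewrite (mulUTE _ _ hC (ltnSn r)) (mulUTE _ _ (isUT_mul hB hC) (ltnSn r)).
under eq_bigr => k _ do rewrite (mulUTE _ _ hB (ltn_ord k)) mulr_suml.
rewrite exchange_big /=; apply: eq_bigr => m _.
by rewrite (mulUTE _ _ hC (ltnSn r)) mulr_sumr; apply: eq_bigr => k _; rewrite mulrA.
Qed.

Lemma mul1UT A : isUT A -> mulUT (eUT F) A = A.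
Proof.
move=> hA; apply: matrixP => i j; rewrite /mulUT /eUT.
under eq_bigr => k _ do rewrite eq_sym.
exact: sum_deltaUT.
Qed.

Lemma mulUT1 A : mulUT A (eUT F) = A.
Proof. by apply: matrixP => i j; rewrite /mulUT /eUT sum_delta_r ltnSn. Qed.

Lemma size_invrow A i n : size (invrow A i n) = n.
Proof. by elim: n => //= n IH; rewrite size_rcons IH. Qed.

Lemma nth_invrow A i n j : (j < n)%N -> (invrow A i n)`_j = (invrow A i j.+1)`_j.
Proof.
elim: n => // n IH; rewrite ltnS leq_eqVlt => /orP [/eqP -> //| jn].
by rewrite /= nth_rcons size_invrow jn IH.
Qed.

Lemma invUTE A i j :
  invUT A i j = if (j < i)%N then 0 else if j == i then 1
                else - \sum_(i <= k < j) invUT A i k * A k j.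
Proof.
rewrite /invUT /= nth_rcons size_invrow ltnn eqxx.
do 2!case: ifP => // _; congr (- _).
by apply: eq_big_nat => k /andP [_ kj]; rewrite nth_invrow.
Qed.

Lemma isUT_inv A : isUT (invUT A).
Proof. by move=> i j; rewrite invUTE ltnn eqxx; split=> // ji; rewrite invUTE ji. Qed.

Lemma mulVUT A : isUT A -> mulUT (invUT A) A = eUT F.
Proof.
move=> hA; apply: matrixP => i j; rewrite /mulUT /eUT.
case: (ltngtP j i) => ij.
- rewrite big1 ?(gtn_eqF ij) // => k _.
  by rewrite invUTE (leq_trans (ltn_ord k) ij) mul0r.
- rewrite big_ord_recr /= (proj1 (hA j j)) mulr1 [invUT A i j]invUTE.
  rewrite ltnNge (ltnW ij) (gtn_eqF ij) ?(ltn_eqF ij) /=.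
  rewrite -(big_mkord xpredT (fun k => invUT A i k * A k j)).
  rewrite (big_cat_nat (leq0n i) (ltnW ij)) /= big1_seq ?add0r ?addrN //.
  by move=> k; rewrite mem_index_iota /= => ki; rewrite invUTE ki mul0r.
- subst j; rewrite big_ord_recr /= big1 ?add0r ?eqxx.
    by rewrite invUTE ltnn eqxx (proj1 (hA i i)) mulr1.
  by move=> k _; rewrite invUTE ltn_ord mul0r.
Qed.

Lemma invUTK A : isUT A -> invUT (invUT A) = A.
Proof.
move=> hA; have hV := isUT_inv A.
rewrite -[LHS]mulUT1 -(mulVUT hA) -mulUTA // (mulVUT hV) mul1UT //.
Qed.

Lemma mulUTV A : isUT A -> mulUT A (invUT A) = eUT F.
Proof. by move=> hA; rewrite -{1}(invUTK hA) mulVUT //; exact: isUT_inv. Qed.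

Lemma invUT_unique A X : isUT A -> mulUT X A = eUT F -> X = invUT A.
Proof.
move=> hA XA; have hV := isUT_inv A.
by rewrite -[X]mulUT1 -(mulUTV hA) -mulUTA // XA mul1UT.
Qed.

Lemma isUT_comm x y : isUT x -> isUT y -> isUT (commUT x y).
Proof. by move=> hx hy; rewrite /commUT; do !apply: isUT_mul => //; exact: isUT_inv. Qed.

Lemma commUTxx x : isUT x -> commUT x x = eUT F.
Proof.
move=> hx; have hV := isUT_inv x.
by rewrite /commUT [mulUT (mulUT x x) _]mulUTA // mulUTV // mulUT1 mulUTV.
Qed.

Lemma natrT : (true%:R : F) = 1. Proof. by []. Qed.
Lemma natrF : (false%:R : F) = 0. Proof. by []. Qed.

Lemma tUTE i q (c : F) p r :
  tUT i q c p r = (p == r)%:R + c * ((p == i)%:R * (r == q)%:R).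
Proof. by rewrite /tUT /eUT /munit -natrM mulnb. Qed.

Lemma isUT_t i q (c : F) : (i < q)%N -> isUT (tUT i q c).
Proof.
move=> iq k l; rewrite !tUTE eqxx; split.
  by case: (k =P i) => [->|_]; rewrite ?(ltn_eqF iq) !natrF ?mul0r !mulr0 addr0.
move=> lk; rewrite (gtn_eqF lk) add0r.
case: (k =P i) => [ki|_]; last by rewrite natrF mul0r mulr0.
by case: (l =P q) => [lq|_]; [lia | rewrite natrF !mulr0].
Qed.

Lemma mulUT_t A i q (c : F) p r : (i < q)%N ->
  mulUT A (tUT i q c) p r = A p r + c * A p i * (r == q)%:R.
Proof.
move=> iq; rewrite /mulUT.
under eq_bigr => k _ do rewrite tUTE mulrDr.
rewrite big_split /= sum_delta_r ltnSn; congr (_ + _).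
case: (r =P q) => [->|_]; last by rewrite natrF mulr0 big1 // => k _; rewrite !mulr0.
have := sum_delta_r q.+1 i (fun k => c * A p k); rewrite ltnS (ltnW iq) natrT mulr1 => <-.
by apply: eq_bigr => k _; rewrite mulr1 mulrCA mulrA.
Qed.

Lemma invUT_t i q (c : F) : (i < q)%N -> invUT (tUT i q c) = tUT i q (- c).
Proof.
move=> iq; apply: esym; apply: invUT_unique; first exact: isUT_t.
apply: matrixP => p r; rewrite mulUT_t // !tUTE (ltn_eqF iq) /eUT.
by case: (p == i); rewrite ?natrF ?natrT; ring.
Qed.

Lemma commUT_tE x i q (c : F) p r : isUT x -> (i < q)%N ->
  commUT x (tUT i q c) p r =
  (p == r)%:R + c * (x p i * invUT x q r - (p == i)%:R * (r == q)%:R).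
Proof.
move=> hx iq; have hV := isUT_inv x.
have xtV p' r' : mulUT (mulUT x (tUT i q c)) (invUT x) p' r' =
    (p' == r')%:R + c * x p' i * invUT x q r'.
  rewrite (mulUTE _ _ hV (ltnSn r')).
  under eq_bigr => k _ do rewrite mulUT_t // mulrDl.
  rewrite big_split /= -/(mulUT x (invUT x) p' r') mulUTV //; congr (_ + _).
  rewrite -(sum_deltaUT q r' hV) mulr_sumr; apply: eq_bigr => k _; ring.
rewrite /commUT invUT_t // mulUT_t // !xtV (proj2 (hV q i) iq); ring.
Qed.

Lemma commUT_t_unit_row_from x i q (c : F) p : isUT x -> (i < q)%N -> (i < p)%N ->
  unit_row (commUT x (tUT i q c)) p.
Proof.
move=> hx iq ip r; rewrite commUT_tE // (proj2 (hx p i) ip) (gtn_eqF ip) natrF.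
by rewrite mul0r mul0r subrr mulr0 addr0.
Qed.

Lemma invUT_unit_row x q : isUT x -> unit_row x q -> unit_row (invUT x) q.
Proof.
move=> hx xq r; have := congr1 (fun M => M q r) (mulUTV hx).
rewrite /mulUT /eUT /=; under eq_bigr => k _ do rewrite xq eq_sym.
by rewrite sum_deltaUT //; exact: isUT_inv.
Qed.

Lemma invUT_eq_rows A B k : isUT A -> isUT B ->
  (forall p r, (k <= p)%N -> A p r = B p r) ->
  forall p r, (k <= p)%N -> invUT A p r = invUT B p r.
Proof.
move=> hA hB eAB; have hVA := isUT_inv A.
pose D := mulUT (invUT A) B; have hD : isUT D by exact: isUT_mul.
have D_unit p : (k <= p)%N -> unit_row D p.
  move=> kp r; have := congr1 (fun M => M p r) (mulVUT hA); rewrite /eUT => <-.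
  rewrite /D /mulUT; apply: eq_bigr => l _; case: (ltnP l p) => lp.
    by rewrite (proj2 (hVA p l) lp) !mul0r.
  by rewrite eAB // (leq_trans kp lp).
have VB : invUT B = mulUT (invUT D) (invUT A).
  apply: esym; apply: invUT_unique => //.
  by rewrite mulUTA ?mulVUT //; exact: isUT_inv.
move=> p r kp; rewrite VB /mulUT.
under eq_bigr => l _ do rewrite (invUT_unit_row hD (D_unit p kp)) eq_sym.
by rewrite sum_deltaUT.
Qed.

Lemma vanishing_term a m i (j c : nat) : vanishes_from a m ->
  ((j == c) -> (m <= i)%N) -> a i * (j == c)%:R = 0.
Proof. by move=> am; case: eqP => [_ /(_ isT) /am ->|_ _]; rewrite ?mul0r ?mulr0. Qed.

Definition colUT v n : nmat F := fun p r => (p == r)%:R + v p * (r == n)%:R.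

Lemma isUT_colUT v n : vanishes_from v n -> isUT (colUT v n).
Proof.
move=> vn i j; rewrite /colUT; split=> [|ji].
  by rewrite eqxx (vanishing_term vn) ?addr0 // => /eqP; lia.
by rewrite gtn_eqF // (vanishing_term vn) ?addr0 // => /eqP; lia.
Qed.

Lemma colUT0 v n : (forall p, v p = 0) -> colUT v n = eUT F.
Proof. by move=> v0; apply: matrixP => p r; rewrite /colUT v0 mul0r addr0. Qed.

Lemma colUT_unit_col v n p r : r != n -> colUT v n p r = (p == r)%:R.
Proof. by move=> /negbTE rn; rewrite /colUT rn mulr0 addr0. Qed.

Lemma colUT_unit_row v n q : v q = 0 -> unit_row (colUT v n) q.
Proof. by move=> vq r; rewrite /colUT vq mul0r addr0. Qed.

Lemma colUT_delta i n (c : F) : colUT (fun p => c * (p == i)%:R) n = tUT i n c.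
Proof. by apply: matrixP => p r; rewrite /colUT tUTE; ring. Qed.

Lemma mulUT_colUT_l v n B p r : isUT B ->
  mulUT (colUT v n) B p r = B p r + v p * B n r.
Proof.
move=> hB; rewrite /mulUT /colUT.
under eq_bigr => k _ do rewrite mulrDl eq_sym.
rewrite big_split /= sum_deltaUT //; congr (_ + _).
rewrite -(sum_deltaUT n r hB) mulr_sumr; apply: eq_bigr => k _; ring.
Qed.

Lemma invUT_colUT v n : vanishes_from v n -> invUT (colUT v n) = colUT (fun p => - v p) n.
Proof.
move=> vn; apply: esym; apply: invUT_unique; first exact: isUT_colUT.
apply: matrixP => p r; rewrite mulUT_colUT_l; last exact: isUT_colUT.
by rewrite /colUT /eUT (vn n) // [n == r]eq_sym; ring.
Qed.

Lemma commUT_t_unit_row x i q (c : F) : isUT x -> (i < q)%N -> unit_row x q ->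
  commUT x (tUT i q c) = colUT (fun p => c * (x p i - (p == i)%:R)) q.
Proof.
move=> hx iq xq; apply: matrixP => p r.
by rewrite commUT_tE // (invUT_unit_row hx xq) /colUT [q == r]eq_sym; ring.
Qed.

Lemma commUT_colUT_t v n r (c : F) : vanishes_from v n -> (n < r)%N ->
  commUT (colUT v n) (tUT n r c) = colUT (fun p => c * v p) r.
Proof.
move=> vn nr; rewrite commUT_t_unit_row //; last 2 first.
- exact: isUT_colUT.
- by apply: colUT_unit_row; rewrite vn // ltnW.
by congr colUT; apply: functional_extensionality => p; rewrite /colUT eqxx natrT; ring.
Qed.

Lemma commUT_commUT_t x j k l : isUT x -> (0 < j)%N -> (j < k)%N -> (k < l)%N ->
  commUT (commUT x (tUT 0 j 1)) (tUT k l 1) = tUT 0 l (invUT x j k).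
Proof.
move=> hx j0 jk kl; have l0 : (0 < l)%N by lia.
have hN : isUT (commUT x (tUT 0 j 1)) by apply: isUT_comm => //; exact: isUT_t.
rewrite commUT_t_unit_row //; last first.
  by move=> r; rewrite commUT_tE // isUT_col0 // (gtn_eqF l0) natrF; ring.
apply: matrixP => p r.
by rewrite /colUT tUTE commUT_tE // isUT_col0 // (gtn_eqF jk) natrF; ring.
Qed.

Definition colUT2 a b m : nmat F :=
  fun p r => (p == r)%:R + a p * (r == m)%:R + b p * (r == m.+1)%:R.

Lemma isUT_colUT2 a b m : vanishes_from a m -> vanishes_from b m -> isUT (colUT2 a b m).
Proof.
move=> am bm i j; rewrite /colUT2; split=> [|ji].
  by rewrite eqxx !(vanishing_term am, vanishing_term bm) ?addr0 // => /eqP; lia.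
by rewrite gtn_eqF // !(vanishing_term am, vanishing_term bm) ?addr0 // => /eqP; lia.
Qed.

Lemma colUT2_unit_col a b m p r : r != m -> r != m.+1 -> colUT2 a b m p r = (p == r)%:R.
Proof. by move=> /negbTE rm /negbTE rm1; rewrite /colUT2 rm rm1 !mulr0 !addr0. Qed.

Lemma colUT2_unit_row a b m q : a q = 0 -> b q = 0 -> unit_row (colUT2 a b m) q.
Proof. by move=> aq bq r; rewrite /colUT2 aq bq !mul0r !addr0. Qed.

Lemma colUT2_col_l a b m : (fun p => colUT2 a b m p m - (p == m)%:R) = a.
Proof.
apply: functional_extensionality => p.
by rewrite /colUT2 eqxx natrT (_ : (m == m.+1) = false) ?natrF; [ring | lia].
Qed.

Lemma colUT2_col_r a b m : (fun p => colUT2 a b m p m.+1 - (p == m.+1)%:R) = b.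
Proof.
apply: functional_extensionality => p.
by rewrite /colUT2 eqxx natrT (_ : (m.+1 == m) = false) ?natrF; [ring | lia].
Qed.

Lemma mulUT_colUT2_l a b m B p r : isUT B ->
  mulUT (colUT2 a b m) B p r = B p r + a p * B m r + b p * B m.+1 r.
Proof.
move=> hB; rewrite /mulUT /colUT2.
under eq_bigr => k _ do rewrite !mulrDl eq_sym.
rewrite !big_split /= sum_deltaUT //; congr (_ + _ + _).
  rewrite -(sum_deltaUT m r hB) mulr_sumr; apply: eq_bigr => k _; ring.
rewrite -(sum_deltaUT m.+1 r hB) mulr_sumr; apply: eq_bigr => k _; ring.
Qed.

Lemma invUT_colUT2 a b m : vanishes_from a m -> vanishes_from b m ->
  invUT (colUT2 a b m) = colUT2 (fun p => - a p) (fun p => - b p) m.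
Proof.
move=> am bm; apply: esym; apply: invUT_unique; first exact: isUT_colUT2.
apply: matrixP => p r; rewrite mulUT_colUT2_l; last exact: isUT_colUT2.
rewrite /colUT2 /eUT (am m) // (am m.+1) // (bm m) // (bm m.+1) //.
by rewrite [m == r]eq_sym [m.+1 == r]eq_sym; ring.
Qed.

Lemma commUT_colUT_colUT2 u a b m :
  vanishes_from u m.+2 -> u m = -1 -> u m.+1 = -1 ->
  vanishes_from a m -> vanishes_from b m ->
  commUT (colUT u m.+2) (colUT2 a b m) = colUT (fun p => a p + b p) m.+2.
Proof.
move=> um2 um um1 am bm.
have hU := isUT_colUT um2; have hX := isUT_colUT2 am bm.
have hU' : isUT (colUT (fun p => - u p) m.+2).
  by apply: isUT_colUT => p ?; rewrite um2 ?oppr0.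
have hX' : isUT (colUT2 (fun p => - a p) (fun p => - b p) m).
  by apply: isUT_colUT2 => p ?; rewrite ?am ?bm ?oppr0.
have hUX' := isUT_mul hU' hX'.
rewrite /commUT invUT_colUT // invUT_colUT2 // mulUTA // mulUTA //.
apply: matrixP => p r; rewrite mulUT_colUT_l; last exact: isUT_mul.
rewrite !mulUT_colUT2_l // !mulUT_colUT_l //.
have [a0 a1 a2] : [/\ a m = 0, a m.+1 = 0 & a m.+2 = 0] by split; apply: am; lia.
have [b0 b1 b2] : [/\ b m = 0, b m.+1 = 0 & b m.+2 = 0] by split; apply: bm; lia.
rewrite /colUT2 /colUT ?a0 ?a1 ?a2 ?b0 ?b1 ?b2 um um1 (um2 m.+2) //.
by rewrite [m == r]eq_sym [m.+1 == r]eq_sym [m.+2 == r]eq_sym; ring.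
Qed.

End UnitriangularMatrices.

Section AlmostIdentityPCmap.
Variables (F : fieldType) (phi : nmat F -> nmat F).
Hypothesis phiUT : forall x, isUT x -> isUT (phi x).
Hypothesis phi_comm : forall x y, isUT x -> isUT y ->
  phi (commUT x y) = commUT (phi x) (phi y).
Hypothesis phi_t : almost_identity phi.
Implicit Types (x : nmat F) (v a b : nat -> F).

Lemma phi_e : phi (eUT F) = eUT F.
Proof.
have ht := isUT_t (1 : F) (ltnSn 0).
by rewrite -(commUTxx ht) phi_comm // phi_t.
Qed.

Lemma phi_invUT_row x j k : isUT x -> (0 < j)%N -> invUT (phi x) j k = invUT x j k.
Proof.
move=> hx j0; have [jk|kj] := ltnP j k; last first.
  have [hV hV'] := (isUT_inv (phi x), isUT_inv x).
  case: (ltngtP j k) kj => // [kj _|<- _]; first by rewrite (proj2 (hV j k)) ?(proj2 (hV' j k)).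
  by rewrite (proj1 (hV j j)) (proj1 (hV' j j)).
have [ht1 ht2] := (isUT_t (1 : F) j0, isUT_t (1 : F) (ltnSn k)).
have e : phi (commUT (commUT x (tUT 0 j 1)) (tUT k k.+1 1)) =
         commUT (commUT (phi x) (tUT 0 j 1)) (tUT k k.+1 1).
  rewrite phi_comm ?phi_comm ?phi_t //; try lia; exact: isUT_comm.
move: e; rewrite (commUT_commUT_t hx) // (commUT_commUT_t (phiUT hx)) // phi_t //.
by move/(congr1 (fun M => M 0%N k.+1)); rewrite !tUTE !eqxx natrT !mulr1 => /addrI ->.
Qed.

Lemma phi_row x p r : isUT x -> (0 < p)%N -> phi x p r = x p r.
Proof.
move=> hx p0; have hphi := phiUT hx.
have eV p' r' : (0 < p')%N -> invUT (phi x) p' r' = invUT x p' r'.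
  exact: phi_invUT_row.
have := invUT_eq_rows (isUT_inv (phi x)) (isUT_inv x) eV r p0.
by rewrite !invUTK.
Qed.

Lemma phi_col_of_comm x i q : isUT x -> (i < q)%N ->
  phi (commUT x (tUT i q 1)) = commUT x (tUT i q 1) -> forall p, phi x p i = x p i.
Proof.
move=> hx iq e p; have ht := isUT_t (1 : F) iq.
have : commUT (phi x) (tUT i q 1) = commUT x (tUT i q 1) by rewrite -e phi_comm ?phi_t.
move/(congr1 (fun M => M p q)); rewrite !commUT_tE //; last exact: phiUT.
by rewrite !(proj1 (isUT_inv _ q q)) !mulr1 !mul1r => /addrI /addIr.
Qed.

Lemma phi_unit_col x i q : isUT x -> (i < q)%N ->
  (forall p, x p i = (p == i)%:R) -> unit_row x q -> forall p, phi x p i = x p i.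
Proof.
move=> hx iq xi xq; apply: (phi_col_of_comm hx iq).
by rewrite commUT_t_unit_row // colUT0 ?phi_e // => p; rewrite xi subrr mulr0.
Qed.

Definition set_top v c : nat -> F := fun p => if p == 0%N then c else v p.

Lemma set_top0 v c : set_top v c 0 = c.
Proof. by []. Qed.

Lemma vanishes_set_top v c n : (0 < n)%N -> vanishes_from v n ->
  vanishes_from (set_top v c) n.
Proof. by move=> n0 vn p np; rewrite /set_top ifN ?vn //; lia. Qed.

Definition phi_corner v n := phi (colUT v n) 0%N n.

Lemma phi_colUT v n : (0 < n)%N -> vanishes_from v n ->
  phi (colUT v n) = colUT (set_top v (phi_corner v n)) n.
Proof.
move=> n0 vn; have hC := isUT_colUT vn; apply: matrixP => p r.
case: p => [|p]; last by rewrite phi_row.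
rewrite [RHS]/colUT /set_top /=; case: (r =P n) => [->|rn].
  by rewrite (ltn_eqF n0) natrT natrF add0r mulr1.
move/eqP: rn; rewrite natrF mulr0 addr0; case: r => [|r] rn.
  exact: (proj1 (phiUT hC 0 0)).
rewrite (@phi_unit_col _ _ (maxn r.+1 n).+1) ?colUT_unit_col // ?ltnS ?leq_maxl //.
- by move=> p; rewrite colUT_unit_col.
- by apply: colUT_unit_row; rewrite vn // ltnW // ltnS leq_maxr.
Qed.

Lemma phi_corner_scale v n r (c : F) : (0 < n)%N -> (n < r)%N -> vanishes_from v n ->
  phi_corner (fun p => c * v p) r = c * phi_corner v n.
Proof.
move=> n0 nr vn; have ht := isUT_t c nr.
rewrite /phi_corner -(commUT_colUT_t c vn nr) phi_comm ?phi_t //; last exact: isUT_colUT.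
rewrite phi_colUT // commUT_colUT_t //; last exact: vanishes_set_top.
by rewrite /colUT /set_top !eqxx /= (ltn_eqF n0) (ltn_eqF (ltn_trans n0 nr)) !add0r !mulr1.
Qed.

Lemma phi_corner_shift v n r : (0 < n)%N -> (n < r)%N -> vanishes_from v n ->
  phi_corner v r = phi_corner v n.
Proof.
move=> n0 nr vn; rewrite -[phi_corner v n]mul1r -(phi_corner_scale 1 n0 nr vn).
by congr phi_corner; apply: functional_extensionality => p; rewrite mul1r.
Qed.

Lemma phi_corner_indep v n n' : (0 < n)%N -> (0 < n')%N ->
  vanishes_from v n -> vanishes_from v n' -> phi_corner v n = phi_corner v n'.
Proof.
move=> n0 n'0 vn vn'; rewrite -(@phi_corner_shift v n (maxn n n').+1) ?ltnS ?leq_maxl //.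
by rewrite (@phi_corner_shift v n') ?ltnS ?leq_maxr.
Qed.

Lemma phi_top_entry x i q : isUT x -> (0 < i)%N -> (i < q)%N -> unit_row x q ->
  phi x 0%N i = phi_corner (fun p => x p i - (p == i)%:R) q.
Proof.
rewrite /phi_corner => hx i0 iq xq; have q0 : (0 < q)%N by lia.
have hphi := phiUT hx; have ht := isUT_t (1 : F) iq.
have phi_xq : unit_row (phi x) q by move=> r; rewrite phi_row.
have -> : colUT (fun p => x p i - (p == i)%:R) q = commUT x (tUT i q 1).
  by rewrite commUT_t_unit_row //; congr colUT; apply: functional_extensionality => p; rewrite mul1r.
rewrite phi_comm // phi_t //.
rewrite commUT_t_unit_row // /colUT (ltn_eqF q0) (ltn_eqF i0) eqxx natrT; ring.
Qed.

Lemma phi_colUT2 a b m : (0 < m)%N -> vanishes_from a m -> vanishes_from b m ->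
  phi (colUT2 a b m) =
  colUT2 (set_top a (phi_corner a m.+2)) (set_top b (phi_corner b m.+2)) m.
Proof.
move=> m0 am bm; have hX := isUT_colUT2 am bm; apply: matrixP => p r.
case: p => [|p]; last by rewrite phi_row // /colUT2 /set_top.
have X_row q : (m.+2 <= q)%N -> unit_row (colUT2 a b m) q.
  by move=> mq; apply: colUT2_unit_row; [apply: am | apply: bm]; lia.
rewrite [RHS]/colUT2 !set_top0.
case: (r =P m) => [->|/eqP rm].
  rewrite (phi_top_entry hX m0 _ (X_row _ (leqnn _))) // colUT2_col_l.
  by rewrite (ltn_eqF m0) (_ : (m == m.+1) = false) ?natrF ?natrT; [ring | lia].
case: (r =P m.+1) => [->|/eqP rm1].
  rewrite (phi_top_entry hX _ _ (X_row _ (leqnn _))) // colUT2_col_r.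
  by rewrite natrF natrT; ring.
rewrite natrF !mulr0 !addr0.
case: r rm rm1 => [|r] rm rm1; first exact: (proj1 (phiUT hX 0 0)).
rewrite (@phi_unit_col _ _ (maxn r.+1 m.+2).+1) ?colUT2_unit_col //.
- by rewrite ltnS leq_maxl.
- by move=> p; rewrite colUT2_unit_col.
- by apply: X_row; rewrite ltnW // ltnS leq_maxr.
Qed.

Lemma phi_cornerD a b m : (0 < m)%N -> vanishes_from a m -> vanishes_from b m ->
  phi_corner (fun p => a p + b p) m.+2 = phi_corner a m.+2 + phi_corner b m.+2.
Proof.
move=> m0 am bm; pose u p : F := - ((p == m)%:R + (p == m.+1)%:R).
have um2 : vanishes_from u m.+2.
  by move=> p mp; rewrite /u (_ : p == m = false) 1?(_ : p == m.+1 = false) ?addr0 ?oppr0 //;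
    apply/eqP; lia.
have um : u m = -1 by rewrite /u eqxx (_ : (m == m.+1) = false) ?natrF ?addr0 //; lia.
have um1 : u m.+1 = -1 by rewrite /u eqxx (_ : (m.+1 == m) = false) ?natrF ?add0r //; lia.
set g := phi_corner u m.+2.
have um' : set_top u g m = -1 by rewrite /set_top (gtn_eqF m0).
rewrite /phi_corner -(commUT_colUT_colUT2 um2 um um1 am bm) phi_comm; last 2 first.
- exact: isUT_colUT.
- exact: isUT_colUT2.
rewrite (phi_colUT _ um2) // (phi_colUT2 m0 am bm) -/g.
rewrite (commUT_colUT_colUT2 (vanishes_set_top g (ltn0Sn _) um2) um' um1);
  try exact: vanishes_set_top.
by rewrite /colUT !set_top0 eqxx (ltn_eqF (ltn0Sn _)) natrF natrT add0r mulr1.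
Qed.

Lemma phi_corner_delta i n (c : F) : (i < n)%N ->
  phi_corner (fun p => c * (p == i)%:R) n = c * (0%N == i)%:R.
Proof.
move=> iN; rewrite /phi_corner colUT_delta.
have := congr1 (fun M => M 0%N n) (phi_t c iN); rewrite /= => ->.
by rewrite tUTE (ltn_eqF (leq_ltn_trans (leq0n i) iN)) eqxx natrF natrT; ring.
Qed.

Lemma phi_cornerE m v n : vanishes_from v m -> (m < n)%N -> phi_corner v n = v 0%N.
Proof.
elim: m v n => [|m IH] v n vm mn.
  rewrite /phi_corner colUT0 ?phi_e /eUT ?vm ?(ltn_eqF mn) // => p; exact: vm.
have vn : vanishes_from v n by move=> p np; apply: vm; lia.
have n0 : (0 < n)%N by lia.
rewrite (@phi_corner_indep v n m.+3) //; last by move=> p ?; apply: vm; lia.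
pose v1 p := if (p < m)%N then v p else 0.
have ev : v = fun p => v1 p + v m * (p == m)%:R.
  apply: functional_extensionality => p; rewrite /v1.
  case: (ltngtP p m) => [pm|mp|->]; rewrite ?natrF ?natrT ?mulr0 ?mulr1 ?addr0 ?add0r //.
  exact: vm.
have v1m : vanishes_from v1 m by move=> p mp; rewrite /v1 ltnNge mp.
have wm : vanishes_from (fun p => v m * (p == m)%:R) m.+1.
  by move=> p mp; rewrite (_ : p == m = false) ?natrF ?mulr0 //; apply/eqP; lia.
have v1m1 : vanishes_from v1 m.+1 by move=> p mp; apply: v1m; lia.
have := phi_cornerD (ltn0Sn m) v1m1 wm; rewrite -ev (IH v1 m.+3 v1m (leqW (leqnSn _))) => ->.
rewrite [RHS](congr1 (fun f => f 0%N) ev); congr (_ + _); apply: phi_corner_delta; lia.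
Qed.

Lemma phi_colUT_id v n : (0 < n)%N -> vanishes_from v n -> phi (colUT v n) = colUT v n.
Proof.
move=> n0 vn; rewrite phi_colUT // -(@phi_corner_shift v n n.+1) // (phi_cornerE vn) //.
by congr colUT; apply: functional_extensionality => -[|p].
Qed.

Lemma phi_id_unit_rows x k : isUT x -> (forall q, (k <= q)%N -> unit_row x q) -> phi x = x.
Proof.
move=> hx xk; apply: matrixP => p [|r]; first by rewrite (isUT_col0 _ (phiUT hx)) (isUT_col0 _ hx).
have rq : (r.+1 < (maxn r.+1 k).+1)%N by rewrite ltnS leq_maxl.
have xq : unit_row x (maxn r.+1 k).+1 by apply: xk; rewrite ltnW // ltnS leq_maxr.
apply: (phi_col_of_comm hx rq); rewrite commUT_t_unit_row // phi_colUT_id //.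
move=> p' qp'; have rp : (r.+1 < p')%N := leq_trans rq qp'.
by rewrite (proj2 (hx p' r.+1) rp) (gtn_eqF rp) subrr mulr0.
Qed.

End AlmostIdentityPCmap.

Theorem mainTheorem6 (F : fieldType) (phi : nmat F -> nmat F) :
  PCmap phi -> almost_identity phi -> forall x : nmat F, isUT x -> phi x = x.
Proof.
case=> phiUT _ _ phi_comm phi_t x hx; apply: matrixP => p [|r].
  by rewrite (isUT_col0 _ (phiUT _ hx)) (isUT_col0 _ hx).
have rr : (r.+1 < r.+2)%N by [].
apply: (phi_col_of_comm phiUT phi_comm phi_t hx rr).
apply: (phi_id_unit_rows phiUT phi_comm phi_t (k := r.+2)).
  by apply: isUT_comm => //; exact: isUT_t.
by move=> q rq; apply: commUT_t_unit_row_from.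
Qed.
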